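(* Let $k\ge2$ and $n\ge k$. In the simultaneous sealed-bid auction of $n$ objects among an adversary ${\mathcal A}$ and $k-1$ disadvantaged bidders described in the context, suppose each disadvantaged bidder independently draws his bid vector $(b_1,\dots,b_n)$ from an $n$-dimensional probability distribution with $\sum_i b_i=1$ such that each $b_i$ has cumulative distribution function $F_k$, where $F_k(x)=\left(\frac nk x\right)^{\frac1{k-1}}$ for $x\in[0,\frac kn]$ and $F_k(x)=1$ for $x\in(\frac kn,1]$. Then for every (possibly randomized, independent of the disadvantaged bidders' bids) bid vector of ${\mathcal A}$, the expected number of objects won by ${\mathcal A}$ is at most $n/k$.
   Context: Auction model: $n$ objects are auctioned simultaneously to $k$ bidders; each bidder has budget $1$ and submits a vector of bids (one per object, positive reals) with sum at most $1$. Each object is won by the highest bidder on it; if $m$ bidders tie for the highest bid, each wins with probability $1/m$. The adversary ${\mathcal A}$ knows the bidding algorithms (bid distributions) of the other $k-1$ bidders but not their realized bids. *)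

From HB Require Import structures.
From mathcomp Require Import all_boot all_order all_algebra.
From mathcomp Require Import all_classical all_reals all_analysis.
Set Implicit Arguments. Unset Strict Implicit. Unset Printing Implicit Defensive.
Import Order.TTheory GRing.Theory Num.Theory.
Local Open Scope classical_set_scope.
Local Open Scope ring_scope.

Definition Fk (R : realType) (n k : nat) (x : R) : R :=
  if x <= k%:R / n%:R then ((n%:R / k%:R) * x) `^ ((k%:R - 1)^-1) else 1.

Definition box (R : realType) (T : Type) (n : nat)
  (X : 'I_n -> T -> R) (S : 'I_n -> set R) : set T :=
  [set w | forall j, S j (X j w)].

(* Mutual independence of the random vectors A (adversary) and B 0, ..., B (m-1)
   (disadvantaged bidders): the product rule on measurable boxes (a pi-system
   generating each vector's sigma-algebra, containing the whole space, so this
   is equivalent to independence of the generated sigma-algebras). *)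
Definition bids_independent d (T : measurableType d) (R : realType)
  (P : probability T R) (n m : nat)
  (A : 'I_n -> T -> R) (B : 'I_m -> 'I_n -> T -> R) : Prop :=
  forall (SA : 'I_n -> set R) (SB : 'I_m -> 'I_n -> set R),
    (forall j, measurable (SA j)) -> (forall i j, measurable (SB i j)) ->
    P (box A SA `&` \bigcap_(i in [set: 'I_m]) box (B i) (SB i))
    = (P (box A SA) * \prod_(i < m) P (box (B i) (SB i)))%E.

(* Probability (over the uniform tie-breaking) that the adversary, bidding
   A j w on object j, wins object j against the bids B i j w: if it has a highest
   bid and ties with t other bidders it wins with probability 1/(t+1). *)
Definition win (R : realType) (T : Type) (n m : nat)
  (A : 'I_n -> T -> R) (B : 'I_m -> 'I_n -> T -> R) (j : 'I_n) (w : T) : R :=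
  if [forall i : 'I_m, B i j w <= A j w]
  then (1 + #|[set i : 'I_m | B i j w == A j w]|)%:R^-1
  else 0.

(* The adversary can win object j only if every disadvantaged bid on j is at
   most its own bid a.  By independence this has probability
   F_k(a)^(k-1) <= (n/k) a, so the expected number of objects won is at most
   (n/k) E[sum_j A_j] <= n/k.  Independence is only available on boxes, so
   instead of conditioning on A_j we round it up to the grid (1/N)Z; this costs
   an additive (n/k)(n/N), which vanishes as N grows. *)

From HB Require Import structures.
From mathcomp Require Import all_boot all_order all_algebra.
From mathcomp Require Import all_classical all_reals all_analysis.
From mathcomp Require Import measurable_realfun zify.
Set Implicit Arguments. Unset Strict Implicit. Unset Printing Implicit Defensive.
Import Order.TTheory GRing.Theory Num.Theory.
Local Open Scope classical_set_scope.
Local Open Scope ring_scope.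

(* No measurability is needed: the integral of a nonnegative function is the
   supremum of the integrals of the simple functions below it. *)
Lemma ge0_le_integral_nomeas d (T : measurableType d) (R : realType)
  (mu : {measure set T -> \bar R}) (f g : T -> \bar R) :
  (forall x, (0 <= f x)%E) -> (forall x, (f x <= g x)%E) ->
  (\int[mu]_x f x <= \int[mu]_x g x)%E.
Proof.
move=> f0 fg; have g0 x := le_trans (f0 x) (fg x).
rewrite !ge0_integralTE //; apply: ereal_sup_le => _ [h hf <-].
by exists h => //= x; exact: le_trans (hf x) (fg x).
Qed.

Lemma integral_sum_indic d (T : measurableType d) (R : realType)
  (mu : {measure set T -> \bar R}) (I : finType) (a : I -> R) (E : I -> set T) :
  (forall i, 0 <= a i) -> (forall i, measurable (E i)) ->
  (\int[mu]_x (\sum_i a i * \1_(E i) x)%:E = \sum_i (a i)%:E * mu (E i))%E.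
Proof.
move=> a0 mE; under eq_integral => x _ do rewrite -sumEFin.
rewrite ge0_integral_sum //; last 2 first.
- by move=> i; apply/measurable_EFinP/measurable_funM => //; exact: measurable_indic.
- by move=> i x _; rewrite lee_fin mulr_ge0.
apply: eq_bigr => i _; under eq_integral => x _ do rewrite EFinM.
rewrite ge0_integralZl_EFin ?integral_indic ?setIT //.
exact/measurable_EFinP/measurable_indic.
Qed.

Section boxes.
Context d (T : measurableType d) (R : realType).

Lemma box_coord n (X : 'I_n -> T -> R) (j : 'I_n) (S : set R) :
  box X (fun j' => if j' == j then S else setT) = X j @^-1` S.
Proof.
apply/seteqP; split => [w /(_ j)|w /= Sw j']; first by rewrite eqxx.
by case: eqP => [->|].
Qed.

Lemma bids_independent_coord (P : probability T R) n m
    (A : 'I_n -> T -> R) (B : 'I_m -> 'I_n -> T -> R)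
    (j : 'I_n) (S : set R) (S' : 'I_m -> set R) :
  bids_independent P A B -> measurable S -> (forall i, measurable (S' i)) ->
  P (A j @^-1` S `&` \bigcap_(i in [set: 'I_m]) B i j @^-1` S' i)
  = (P (A j @^-1` S) * \prod_(i < m) P (B i j @^-1` S' i))%E.
Proof.
move=> indep mS mS'.
have mcoord (U : set R) : measurable U -> forall j',
    measurable (if j' == j then U else setT).
  by move=> mU j'; case: ifP.
have := indep _ (fun i j' => if j' == j then S' i else setT) (mcoord _ mS)
  (fun i => mcoord _ (mS' i)).
rewrite box_coord; under eq_bigr do rewrite box_coord.
by under eq_bigcapr do rewrite box_coord.
Qed.

End boxes.

Lemma Fk_pow_le (R : realType) (n k : nat) (t : R) :
  (2 <= k)%N -> (k <= n)%N -> 0 <= t ->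
  Fk n k t ^+ k.-1 <= n%:R / k%:R * t.
Proof.
move=> k2 kn t0; rewrite /Fk.
have k0 : (0 < k%:R :> R) by rewrite ltr0n; lia.
have n0 : (0 < n%:R :> R) by rewrite ltr0n; lia.
case: ifPn => [_|]; last first.
  rewrite -ltNge expr1n => /ltW /(ler_wpM2l (ltW (divr_gt0 n0 k0))).
  by apply: le_trans; rewrite mulrA divfK ?gt_eqF // divff // gt_eqF.
have a0 : 0 <= n%:R / k%:R * t by rewrite mulr_ge0 // divr_ge0 // ltW.
rewrite -powR_mulrn ?powR_ge0 // -powRrM.
have -> : (k%:R - 1)^-1 * k.-1%:R = 1 :> R.
  have -> : k.-1%:R = k%:R - 1 :> R by rewrite -subn1 natrB //; lia.
  by rewrite mulVf // subr_eq0 pnatr_eq1; lia.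
by rewrite powRr1.
Qed.

Section grid.
Context {R : realType} (N : nat).
Hypothesis N_gt0 : (0 < N)%N.

Definition grid_cell (m : nat) : set R := [set` `[m%:R / N%:R, m.+1%:R / N%:R[%R].

Definition grid_index (x : R) : 'I_N.+1 := inord (Num.truncn (N%:R * x)).

(* Capped at 1 because the distribution of the bids is only known on [0, 1]. *)
Definition grid_level (m : nat) : R := Num.min (m.+1%:R / N%:R) 1.

Let N_gt0R : 0 < N%:R :> R. Proof. by rewrite ltr0n. Qed.

Lemma grid_cellE m x : grid_cell m x = (m%:R / N%:R <= x < m.+1%:R / N%:R).
Proof. by rewrite /grid_cell /= in_itv. Qed.

Lemma measurable_grid_cell m : measurable (grid_cell m).
Proof. exact: measurable_itv. Qed.

Lemma grid_index_cell x : 0 <= x <= 1 -> grid_cell (grid_index x) x.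
Proof.
case/andP=> x0 x1; have Nx0 : 0 <= N%:R * x by rewrite mulr_ge0 // ltW.
have Nx_lt : (Num.truncn (N%:R * x) < N.+1)%N.
  rewrite truncn_lt_nat //; apply: (@le_lt_trans _ _ N%:R); last first.
    by rewrite ltr_nat.
  by rewrite ler_piMr // ltW.
rewrite grid_cellE inordK //; case/andP: (truncn_itv Nx0) => lo hi.
by rewrite ler_pdivrMr // ltr_pdivlMr // !(mulrC x) lo hi.
Qed.

Lemma grid_cell_index (m : 'I_N.+1) x : grid_cell m x -> m = grid_index x.
Proof.
rewrite grid_cellE => /andP[lo hi].
rewrite /grid_index; have -> : Num.truncn (N%:R * x) = m.
  by apply/truncn_def; rewrite mulrC -ler_pdivrMr // -ltr_pdivlMr // lo hi.
by rewrite inord_val.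
Qed.

Lemma sum_grid_indic (f : 'I_N.+1 -> R) x : 0 <= x <= 1 ->
  \sum_(m < N.+1) f m * \1_(grid_cell m) x = f (grid_index x).
Proof.
move=> x01; rewrite (bigD1 (grid_index x)) //= big1 ?addr0.
  by rewrite indicE mem_set ?mulr1 //; exact: grid_index_cell.
move=> m /eqP mx; rewrite indicE memNset ?mulr0 // => /grid_cell_index.
by move/mx.
Qed.

Lemma grid_level_itv m : 0 <= grid_level m <= 1.
Proof. by rewrite le_min ge_min lexx orbT divr_ge0 ?ler01. Qed.

Lemma grid_level_ge m x : grid_cell m x -> x <= 1 -> x <= grid_level m.
Proof. by rewrite grid_cellE le_min => /andP[_ /ltW ->]. Qed.

Lemma grid_level_le m x : grid_cell m x -> grid_level m <= x + N%:R^-1.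
Proof.
rewrite grid_cellE => /andP[lo _]; rewrite ge_min -natr1 mulrDl mul1r.
by rewrite lerD2r lo.
Qed.

End grid.

Section discretized_bound.
Context (R : realType) d (T : measurableType d) (P : probability T R) (k n : nat)
  (A : 'I_n -> T -> R) (B : 'I_k.-1 -> 'I_n -> T -> R).
Hypotheses (k_ge2 : (2 <= k)%N) (k_le_n : (k <= n)%N).
Hypothesis mA : forall j, measurable_fun setT (A j).
Hypothesis mB : forall i j, measurable_fun setT (B i j).
Hypothesis A_ge0 : forall w j, 0 <= A j w.
Hypothesis A_sum_le1 : forall w, \sum_(j < n) A j w <= 1.
Hypothesis B_cdf : forall i j (x : R), 0 <= x <= 1 ->
  P [set w | B i j w <= x] = (Fk n k x)%:E.
Hypothesis indep : bids_independent P A B.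
Variable N : nat.
Hypothesis N_gt0 : (0 < N)%N.

Let c : R := n%:R / k%:R.

Let c_ge0 : 0 <= c. Proof. by rewrite divr_ge0. Qed.

Let A_le1 w j : A j w <= 1.
Proof.
apply: le_trans (A_sum_le1 w); rewrite (bigD1 j) //= lerDl.
by apply: sumr_ge0 => i _.
Qed.

Let A_itv w j : 0 <= A j w <= 1. Proof. by rewrite A_ge0 A_le1. Qed.

Let adv_in_cell j (m : 'I_N.+1) : set T := A j @^-1` grid_cell N m.

Let unbeaten j (m : 'I_N.+1) : set T := adv_in_cell j m `&`
  \bigcap_(i in [set: 'I_k.-1]) B i j @^-1` [set` `]-oo, grid_level N m]%R].

Let measurable_adv_in_cell j m : measurable (adv_in_cell j m).
Proof.
by rewrite -[adv_in_cell _ _]setTI; apply: mA => //; exact: measurable_grid_cell.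
Qed.

Let measurable_unbeaten j m : measurable (unbeaten j m).
Proof.
apply: measurableI => //; apply: fin_bigcap_measurable; first exact: finite_finset.
by move=> i _; rewrite -[_ @^-1` _]setTI; apply: mB => //; exact: measurable_itv.
Qed.

Lemma win_le_unbeaten w j : win A B j w <= \sum_m \1_(unbeaten j m) w.
Proof.
rewrite /win; case: ifP => [/forallP B_le|_]; last first.
  by apply: sumr_ge0 => m _; rewrite indicE ler0n.
have cell := grid_index_cell N_gt0 (A_itv w j).
rewrite (bigD1 (grid_index N (A j w))) //= [\1_(unbeaten _ _) w]indicE.
rewrite mem_set; last first.
  split => // i _ /=; rewrite in_itv /=.
  exact: le_trans (B_le i) (grid_level_ge cell (A_le1 w j)).
apply: (@le_trans _ _ 1); first by rewrite invf_le1 ?ltr0n // ler1n.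
by rewrite lerDl sumr_ge0 // => m _; rewrite indicE ler0n.
Qed.

Lemma P_unbeaten_le j m :
  (P (unbeaten j m) <= (c * grid_level N m)%:E * P (adv_in_cell j m))%E.
Proof.
case/andP: (@grid_level_itv R N m) => l_ge0 l_le1.
rewrite /unbeaten bids_independent_coord //; last exact: (@measurable_grid_cell R).
rewrite muleC; apply: lee_wpmul2r => //.
rewrite (eq_bigr (fun _ => (Fk n k (grid_level N m))%:E)); last first.
  by move=> i _; rewrite -(B_cdf i j) ?l_ge0.
by rewrite prodEFin lee_fin prodr_const card_ord Fk_pow_le.
Qed.

Lemma sum_levels_le w :
  \sum_(j < n) \sum_(m < N.+1) c * grid_level N m * \1_(adv_in_cell j m) w
  <= c * (1 + n%:R / N%:R).
Proof.
apply: (@le_trans _ _ (\sum_(j < n) c * (A j w + N%:R^-1))).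
  apply: ler_sum => j _.
  rewrite (sum_grid_indic N_gt0 (fun m => c * grid_level N m) (A_itv w j)).
  by rewrite ler_wpM2l // grid_level_le //; exact: grid_index_cell.
rewrite -mulr_sumr ler_wpM2l // big_split /= sumr_const card_ord.
by rewrite lerD // [_ / _]mulrC mulr_natr.
Qed.

Lemma expected_wins_le_grid :
  ('E_P[fun w => (\sum_(j < n) win A B j w)%R] <= (c * (1 + n%:R / N%:R))%:E)%E.
Proof.
have level_ge0 (m : 'I_N.+1) : 0 <= c * grid_level N m.
  by rewrite mulr_ge0 //; case/andP: (@grid_level_itv R N m).
rewrite unlock.
apply: (@le_trans _ _
    (\int[P]_w (\sum_j \sum_m 1 * \1_(unbeaten j m) w)%:E)%E).
  apply: ge0_le_integral_nomeas => w.
    by rewrite lee_fin sumr_ge0 // => j _; rewrite /win; case: ifP.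
  rewrite lee_fin; apply: ler_sum => j _.
  by under eq_bigr do rewrite mul1r; exact: win_le_unbeaten.
under eq_integral do rewrite pair_bigA /=.
rewrite integral_sum_indic //.
apply: (@le_trans _ _
    (\sum_(p : 'I_n * 'I_N.+1)
       (c * grid_level N p.2)%:E * P (adv_in_cell p.1 p.2))%E).
  by apply: lee_sum => p _; rewrite mul1e; exact: P_unbeaten_le.
rewrite -integral_sum_indic //.
under eq_integral => w _ do rewrite -(pair_bigA _
  (fun (j : 'I_n) (m : 'I_N.+1) => c * grid_level N m * \1_(adv_in_cell j m) w)).
apply: (@le_trans _ _ (\int[P]_w (c * (1 + n%:R / N%:R))%:E)%E).
  apply: ge0_le_integral_nomeas => w.
    rewrite lee_fin; apply: sumr_ge0 => j _; apply: sumr_ge0 => m _.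
    by rewrite mulr_ge0 // indicE ler0n.
  by rewrite lee_fin; exact: sum_levels_le.
rewrite integral_cst // -[X in (_ <= X)%E]mule1 lee_wpmul2l ?probability_le1 //.
by rewrite lee_fin mulr_ge0 // addr_ge0 // divr_ge0.
Qed.

End discretized_bound.

Theorem lemma3p1 (R : realType) (d : measure_display) (T : measurableType d)
  (P : probability T R) (k n : nat)
  (A : 'I_n -> T -> R) (B : 'I_k.-1 -> 'I_n -> T -> R) :
  (2 <= k)%N -> (k <= n)%N ->
  (forall j, measurable_fun setT (A j)) ->
  (forall i j, measurable_fun setT (B i j)) ->
  (forall w j, 0 < A j w) -> (forall w, \sum_(j < n) A j w <= 1) ->
  (forall w i j, 0 < B i j w) -> (forall w i, \sum_(j < n) B i j w = 1) ->
  (forall i j (x : R), 0 <= x <= 1 ->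
     P [set w | B i j w <= x] = (Fk n k x)%:E) ->
  bids_independent P A B ->
  ('E_P[fun w => (\sum_(j < n) win A B j w)%R] <= (n%:R / k%:R)%:E)%E.
Proof.
(* Only the marginal laws of the disadvantaged bids matter. *)
move=> k_ge2 k_le_n mA mB A_gt0 A_sum_le1 _ _ B_cdf indep.
have A_ge0 w j : 0 <= A j w by exact: ltW.
set c := n%:R / k%:R; apply/lee_addgt0Pr => e e_gt0.
pose N := (Num.truncn (c * n%:R / e)).+1.
have N_gt0 : 0 < N%:R :> R by rewrite ltr0n.
apply: le_trans (expected_wins_le_grid k_ge2 k_le_n mA mB A_ge0 A_sum_le1
  B_cdf indep (isT : (0 < N)%N)) _.
rewrite -EFinD lee_fin mulrDr mulr1 lerD2l mulrA ler_pdivrMr //.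
by rewrite [e * _]mulrC -ler_pdivrMr //; apply/ltW/truncnS_gt.
Qed.
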